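(* Let $X_1,\ldots,X_m$ ($m\ge 2$) be real-valued square integrable random variables on a common probability space, $\mathbf{X}=(X_1,\ldots,X_m)$. Then the partial linear mean impact $\iota^{lin}_{X_1\mid X_2,\ldots,X_m}$ is free of confounding (with respect to $X_2,\ldots,X_m$) if and only if $E(X_1\mid X_2,\ldots,X_m)$ is (almost surely) a linear function $\beta_0+\sum_{j=2}^m\beta_jX_j$ of $X_2,\ldots,X_m$.
   Context: With $\mathcal{H}^{lin}_1=\{\delta(\mathbf{X})=\eta_0+\sum_{j=1}^m\eta_jX_j:\ E[\delta(\mathbf{X})]=0,\ E[\delta^2(\mathbf{X})]=1,\ E[X_j\delta(\mathbf{X})]=0\ \text{for all } j\ge 2\}$, the partial linear mean impact of $X_1$ on a square integrable random variable $Y$ is $\iota^{lin}_{X_1\mid X_2,\ldots,X_m}(Y)=\sup_{\delta(\mathbf{X})\in\mathcal{H}^{lin}_1}E[Y\delta(\mathbf{X})]$. This parameter is called free of confounding (with respect to $X_2,\ldots,X_m$) if $\iota^{lin}_{X_1\mid X_2,\ldots,X_m}(Y)=0$ for every square integrable random variable $Y$ such that $E(Y\mid\mathbf{X})=g(X_2,\ldots,X_m)$ for some measurable square integrable $g:\mathbb{R}^{m-1}\to\mathbb{R}$ (i.e. $E(Y\mid\mathbf{X})$ is measurable with respect to the $\sigma$-algebra generated by $X_2,\ldots,X_m$). *)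

From HB Require Import structures.
From mathcomp Require Import all_boot all_order all_algebra.
From mathcomp Require Import all_classical all_reals all_analysis.
Set Implicit Arguments. Unset Strict Implicit. Unset Printing Implicit Defensive.
Import Order.TTheory GRing.Theory Num.Theory.
Local Open Scope classical_set_scope.
Local Open Scope ring_scope.

(* Random variables X_1,...,X_m are represented by X : nat -> T -> R with the
   paper's X_{j+1} being X j, for j < m.  So X_1 = X 0 and X_2..X_m are
   X j for 1 <= j < m. *)

Section defs.
Context {d : measure_display} {T : measurableType d} {R : realType}.
Variable P : probability T R.

Definition sq_integrable (Y : T -> R) : Prop := Y \in Lfun P 2%:E.

Definition sigmaX (X : nat -> T -> R) (I : set nat) : set (set T) :=
  <<s [set A | exists j B, I j /\ measurable B /\ A = X j @^-1` B] >>.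

Definition measurable_wrt (G : set (set T)) (Z : T -> R) : Prop :=
  forall B : set R, measurable B -> G (Z @^-1` B).

Definition is_cond_exp (G : set (set T)) (Y Z : T -> R) : Prop :=
  [/\ measurable_wrt G Z, P.-integrable setT (EFin \o Z) &
      forall A, G A -> (\int[P]_(w in A) (Y w)%:E = \int[P]_(w in A) (Z w)%:E)%E].

Definition Hlin1 (m : nat) (X : nat -> T -> R) : set (T -> R) :=
  [set delta | [/\ exists (eta0 : R) (eta : nat -> R),
                     delta = (fun w => eta0 + \sum_(j < m) eta j * X j w),
                   (expectation P delta = 0)%E,
                   (expectation P (fun w => delta w ^+ 2)%R = 1)%E &
                   forall j, (1 <= j < m)%N -> (expectation P (fun w => X j w * delta w)%R = 0)%E]].

(* partial linear mean impact of X_1 on Y given X_2..X_m;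
   convention: 0 if H^lin_1 is empty *)
Definition partial_lin_impact (m : nat) (X : nat -> T -> R) (Y : T -> R) : \bar R :=
  if `[< Hlin1 m X = set0 >] then 0%E
  else ereal_sup [set expectation P (fun w => Y w * delta w)%R | delta in Hlin1 m X].

Definition free_of_confounding (m : nat) (X : nat -> T -> R) : Prop :=
  forall Y : T -> R, sq_integrable Y ->
    (exists Z : T -> R,
        [/\ is_cond_exp (sigmaX X [set j | (j < m)%N]) Y Z,
            measurable_wrt (sigmaX X [set j | (1 <= j < m)%N]) Z &
            sq_integrable Z]) ->
    partial_lin_impact m X Y = 0%E.

End defs.

(* If E(X_1 | X_2..X_m) = L is linear, every delta in H^lin_1 splits as
   delta' + eta_1 (X_1 - L) with delta' a linear function of X_2..X_m; the
   constraints defining H^lin_1 make delta' orthogonal to 1, X_2, ..., X_m,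
   hence to itself, so delta' = 0 in L^2.  If E(Y | X) = Z is a function of
   X_2..X_m, then E[Y delta] = E[Z delta] = eta_1 E[Z (X_1 - L)] = 0.
   Conversely, let r = X_1 - L be the residual of the L^2 projection of X_1
   onto the span of 1, X_2, ..., X_m.  If r <> 0 then +-r/|r| lies in H^lin_1,
   and for A in sigma(X_2..X_m) the indicator 1_A is its own conditional
   expectation; freedom of confounding gives +-E[1_A r] <= 0, so E[1_A r] = 0
   and L is a version of E(X_1 | X_2..X_m). *)

From HB Require Import structures.
From mathcomp Require Import all_boot all_order all_algebra.
From mathcomp Require Import all_classical all_reals all_analysis.
From mathcomp Require Import measurable_realfun ring.
Import Order.TTheory GRing.Theory Num.Theory.
Set Implicit Arguments.
Unset Strict Implicit.
Unset Printing Implicit Defensive.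
Local Open Scope classical_set_scope.
Local Open Scope ring_scope.

Section Lfun_closed.
Context d (T : measurableType d) (R : realType) (mu : {measure set T -> \bar R}).
Variables (p : \bar R) (p1 : (1 <= p)%E).

Lemma Lfun_measurable (f : T -> R) : f \in Lfun mu p -> measurable_fun setT f.
Proof. by move/sub_Lfun_mfun; rewrite inE. Qed.

Lemma LfunD (f g : T -> R) : f \in Lfun mu p -> g \in Lfun mu p ->
  (fun w => f w + g w) \in Lfun mu p.
Proof. by move=> hf hg; have := LfunP (Lfun_Sub p1 hf + Lfun_Sub p1 hg). Qed.

Lemma LfunZ (a : R) (f : T -> R) : f \in Lfun mu p ->
  (fun w => a * f w) \in Lfun mu p.
Proof. by move=> hf; have := LfunP (a *: Lfun_Sub p1 hf). Qed.

Lemma LfunB (f g : T -> R) : f \in Lfun mu p -> g \in Lfun mu p ->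
  (fun w => f w - g w) \in Lfun mu p.
Proof. by move=> hf hg; have := LfunP (Lfun_Sub p1 hf - Lfun_Sub p1 hg). Qed.

Lemma Lfun_sum (I : Type) (r : seq I) (Q : pred I) (F : I -> T -> R) :
  (forall i, Q i -> F i \in Lfun mu p) ->
  (fun w => \sum_(i <- r | Q i) F i w) \in Lfun mu p.
Proof.
move=> hF; rewrite -fct_sumE; elim/big_rec: _ => [|i f Qi hf].
  exact: (LfunP (0 : LfunType mu p1)).
exact: LfunD (hF i Qi) hf.
Qed.

End Lfun_closed.

Section real_expectation.
Context d (T : measurableType d) (R : realType) (P : probability T R).

(* Only meaningful for integrable [f]: [fine] sends infinite values to [0]. *)
Definition Er (f : T -> R) : R := fine 'E_P[f]%E.

Lemma Lfun2_Lfun1 (f : T -> R) : f \in Lfun P 2%:E -> f \in Lfun P 1.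
Proof. by apply: Lfun_subset12; exact: fin_num_measure. Qed.

Lemma expectation_Er (f : T -> R) : f \in Lfun P 1 -> ('E_P[f] = (Er f)%:E)%E.
Proof. by move=> hf; rewrite fineK // expectation_fin_num. Qed.

Lemma ErD (f g : T -> R) : f \in Lfun P 1 -> g \in Lfun P 1 ->
  Er (fun w => f w + g w) = Er f + Er g.
Proof.
by move=> hf hg; rewrite /Er [X in fine X]expectationD // fineD ?expectation_fin_num.
Qed.

Lemma ErZ (a : R) (f : T -> R) : f \in Lfun P 1 -> Er (fun w => a * f w) = a * Er f.
Proof.
move=> hf; rewrite /Er (_ : (fun w => a * f w) = a \o* f).
  by rewrite expectationZl // fineM ?expectation_fin_num.
by apply/funext => w; rewrite /= mulrC.
Qed.

Lemma ErB (f g : T -> R) : f \in Lfun P 1 -> g \in Lfun P 1 ->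
  Er (fun w => f w - g w) = Er f - Er g.
Proof.
by move=> hf hg; rewrite /Er [X in fine X]expectationB // fineB ?expectation_fin_num.
Qed.

Lemma Er_cst (c : R) : Er (fun _ => c) = c.
Proof. by rewrite /Er expectation_cst. Qed.

Lemma Er_sum (I : Type) (r : seq I) (Q : pred I) (F : I -> T -> R) :
  (forall i, Q i -> F i \in Lfun P 1) ->
  Er (fun w => \sum_(i <- r | Q i) F i w) = \sum_(i <- r | Q i) Er (F i).
Proof.
move=> hF; elim: r => [|i r IH].
  by under eq_fun do rewrite big_nil; rewrite big_nil Er_cst.
under eq_fun do rewrite big_cons; rewrite big_cons; case: ifP => Qi; last exact: IH.
by rewrite ErD ?IH //; [exact: hF | exact: Lfun_sum].
Qed.

Lemma Er_sqr_ge0 (f : T -> R) : 0 <= Er (fun w => f w * f w).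
Proof. by apply/fine_ge0/expectation_ge0 => w; rewrite -expr2 sqr_ge0. Qed.

Lemma Lfun2_indic (A : set T) : measurable A -> (\1_A : T -> R) \in Lfun P 2%:E.
Proof.
move=> mA; rewrite inE; apply/andP; split.
  by rewrite inE /=; exact: measurable_indic.
rewrite inE /= /finite_norm unlock poweR_lty //.
have indic_pow x : (`|\1_A x| `^ 2 = \1_A x :> R)%R.
  by rewrite indicE; case: (x \in A); rewrite ?normr1 ?normr0 ?powR1 ?powR0.
under eq_integral => x _ do rewrite /= indic_pow.
by rewrite integral_indic // setIT (le_lt_trans (probability_le1 P mA)) ?ltry.
Qed.

Lemma integral_setE_indic (A : set T) (f : T -> R) : measurable A ->
  (\int[P]_(x in A) (f x)%:E = \int[P]_x (\1_A x * f x)%:E)%E.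
Proof.
move=> mA; rewrite integral_mkcond; apply: eq_integral => x _.
by rewrite /patch indicE; case: ifP => _; rewrite ?mul1r ?mul0r.
Qed.

End real_expectation.

Section psd_symmetric_form.
Context (R : realFieldType) (V : lmodType R) (B : V -> V -> R).
Hypothesis formC : forall u v, B u v = B v u.
Hypothesis formDl : forall u v w, B (u + v) w = B u w + B v w.
Hypothesis formZl : forall a u w, B (a *: u) w = a * B u w.
Hypothesis form_ge0 : forall u, 0 <= B u u.

Lemma formBl u v w : B (u - v) w = B u w - B v w.
Proof. by rewrite formDl -scaleN1r formZl mulN1r. Qed.

Lemma form_suml (I : Type) (r : seq I) (F : I -> V) w :
  B (\sum_(i <- r) F i) w = \sum_(i <- r) B (F i) w.
Proof.
elim/big_rec2: _ => [|i _ y _ <-]; last exact: formDl.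
by rewrite -(scale0r 0) formZl mul0r.
Qed.

Lemma isotropic_orthogonal y w : B w w = 0 -> B y w = 0.
Proof.
move=> ww0; apply/eqP/negPn/negP => yw0.
pose t := - (B y y + 1) / (2 * B y w).
have tyw : t * B y w = - (B y y + 1) / 2 by rewrite /t invfM mulrA mulfVK.
(* As [B w w = 0], [B (y + t w) (y + t w) = B y y + 2 t B y w], which is [-1]. *)
have := form_ge0 (y + t *: w).
rewrite formDl [B y _]formC [B (t *: w) _]formC !formDl [B y (t *: w)]formC.
rewrite !formZl [B w (t *: w)]formC formZl ww0 (formC w y) tyw.
by rewrite !mulr0 addr0 -addrA -splitr opprD addrA subrr add0r oppr_ge0 ler10.
Qed.

(* Gram-Schmidt: orthogonalize [v n] against [v 0..v (n-1)] into [w] and correct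
   along [w].  If [w] is isotropic, [k0 = B y w / 0 = 0], harmless since then
   [B y w = 0]. *)
Lemma orthogonal_projection_exists n (v : nat -> V) x :
  exists c : nat -> R, forall i, (i < n)%N ->
    B (x - \sum_(k < n) c k *: v k) (v i) = 0.
Proof.
elim: n x => [|n IH] x; first by exists (fun _ => 0).
have [a ha] := IH x; have [b hb] := IH (v n).
set y := x - _ in ha; set w := v n - _ in hb.
have orth_vn z : (forall i, (i < n)%N -> B z (v i) = 0) -> B z (v n) = B z w.
  move=> hz; rewrite [RHS]formC formBl form_suml big1 => [|k _].
    by rewrite subr0 formC.
  by rewrite formZl formC hz ?mulr0.
pose k0 := B y w / B w w.
exists (fun k => if k == n then k0 else a k - k0 * b k) => i.
have -> : \sum_(k < n.+1) (if k == n :> nat then k0 else a k - k0 * b k) *: v k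
    = \sum_(k < n) a k *: v k + k0 *: w.
  rewrite big_ord_recr /= eqxx /w scalerBr.
  under eq_bigr => k _ do rewrite (ltn_eqF (ltn_ord k)) scalerBl -scalerA.
  by rewrite sumrB -scaler_sumr addrAC addrA.
rewrite opprD addrA -/y.
have orth_prev j : (j < n)%N -> B (y - k0 *: w) (v j) = 0.
  by move=> hj; rewrite formBl formZl ha // hb // mulr0 subr0.
rewrite ltnS leq_eqVlt => /orP[/eqP -> | /orth_prev //].
rewrite orth_vn // formBl formZl /k0; have [ww0 | ww0] := eqVneq (B w w) 0.
  by rewrite ww0 mulr0 isotropic_orthogonal // subr0.
by rewrite mulfVK // subrr.
Qed.

End psd_symmetric_form.

Lemma max0E (R : realFieldType) (r : R) : Num.max r 0 = (r + `|r|) / 2.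
Proof. by case: ger0P => _; rewrite ?addrN ?mul0r // mulrDl -splitr. Qed.

Lemma funrposM (T : Type) (R : realFieldType) (f g : T -> R) x :
  (fun y => f y * g y)^\+ x = f^\+ x * g^\+ x + f^\- x * g^\- x.
Proof. by rewrite /funrpos /funrneg !max0E !normrN normrM; field. Qed.

Lemma funrnegM (T : Type) (R : realFieldType) (f g : T -> R) x :
  (fun y => f y * g y)^\- x = f^\+ x * g^\- x + f^\- x * g^\+ x.
Proof. by rewrite /funrpos /funrneg !max0E !normrN normrM; field. Qed.

Lemma sube0_eq (R : realDomainType) (a b : \bar R) : (a - b = 0)%E -> a = b.
Proof. by case: a b => [a||] [b||] //= /eqP; rewrite -EFinB eqe subr_eq0 => /eqP ->. Qed.

Lemma fine_subee (R : numDomainType) (a : \bar R) : fine (a - a)%E = 0.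
Proof. by case: a => [a||] //=; rewrite subrr. Qed.

Lemma funepos_EFin d (T : measurableType d) (R : realType) (f : T -> R) :
  ((EFin \o f)^\+)%E = EFin \o f^\+.
Proof. by apply/funext => x; rewrite funeposE /= EFin_max. Qed.

Lemma funeneg_EFin d (T : measurableType d) (R : realType) (f : T -> R) :
  ((EFin \o f)^\-)%E = EFin \o f^\-.
Proof. by apply/funext => x; rewrite funenegE /= EFin_max. Qed.

Import HBNNSimple.

Section sub_sigma_algebra.
Context d (T : measurableType d) (R : realType) (P : probability T R).
Variable G : set (set T).
Hypothesis G_measurable : forall A, <<s G >> A -> measurable A.
Local Notation T' := (g_sigma_algebraType G).

Lemma sub_sigma_measurable_fun (f : T -> R) :
  measurable_fun (setT : set T') f -> measurable_fun setT f.
Proof.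
move=> mf _ B mB; rewrite setTI; apply: G_measurable.
by have := mf measurableT B mB; rewrite setTI.
Qed.

Lemma integral_mul_nnsfun (D : T -> R) (h : {nnsfun T' >-> R}) :
  measurable_fun setT D -> (forall x, 0 <= D x) ->
  (\int[P]_x ((D x)%:E * (h x)%:E) =
   \sum_(r \in range h) (r%:E * \int[P]_(x in h @^-1` [set r]) (D x)%:E))%E.
Proof.
move=> mD D0.
have mh r : measurable (h @^-1` [set r] : set T).
  by apply: G_measurable; exact: (measurable_funPTI h (measurable_set1 r)).
transitivity (\int[P]_x (\sum_(r \in range h)
    ((D x)%:E * (r%:E * (\1_(h @^-1` [set r]) x)%:E))))%E.
  apply: eq_integral => x _; rewrite [h x]fimfunE -fsumEFin; last exact: fimfunP.
  rewrite ge0_mule_fsumr; last by move=> r; exact: nnfun_muleindic_ge0.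
  by apply: eq_fsbigr => r _; rewrite EFinM.
rewrite ge0_integral_fsum //; first last.
- by move=> r x _; apply: mule_ge0; [rewrite lee_fin | exact: nnfun_muleindic_ge0].
- by move=> r; apply/measurable_EFinP; do 2 apply: measurable_funM => //.
apply: eq_fsbigr => r /[!inE] -[x0 _ <-].
under eq_integral do rewrite muleCA.
rewrite ge0_integralZl //; first last.
- by rewrite lee_fin.
- by move=> x _; rewrite -EFinM lee_fin mulr_ge0 // indicE.
- by apply/measurable_EFinP; apply: measurable_funM.
congr (_ * _)%E; rewrite [RHS]integral_mkcond; apply: eq_integral => x _.
by rewrite /patch indicE; case: ifP; rewrite ?mule1 ?mule0.
Qed.

Lemma eq_integral_mul_sub_sigma (D1 D2 f : T -> R) :
  measurable_fun setT D1 -> measurable_fun setT D2 ->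
  (forall x, 0 <= D1 x) -> (forall x, 0 <= D2 x) ->
  (forall A, <<s G >> A ->
     \int[P]_(x in A) (D1 x)%:E = \int[P]_(x in A) (D2 x)%:E)%E ->
  measurable_fun (setT : set T') f -> (forall x, 0 <= f x) ->
  (\int[P]_x ((D1 x)%:E * (f x)%:E) = \int[P]_x ((D2 x)%:E * (f x)%:E))%E.
Proof.
move=> mD1 mD2 D10 D20 eqD mf f0.
have mf' : measurable_fun (setT : set T') (EFin \o f) by exact/measurable_EFinP.
pose g := nnsfun_approx (@measurableT _ T') mf'.
have approxE (D : T -> R) : measurable_fun setT D -> (forall x, 0 <= D x) ->
    (\int[P]_x ((D x)%:E * (f x)%:E) =
     limn (fun n => \int[P]_x ((D x)%:E * (g n x)%:E)))%E.
  move=> mD D0; rewrite -monotone_convergence //; first last.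
  - move=> x _ a b ab; apply: lee_pmul; rewrite ?lee_fin //.
    by have /lefP := nd_nnsfun_approx (@measurableT _ T') mf' ab; apply.
  - by move=> n x _; apply: mule_ge0; rewrite lee_fin.
  - move=> n; apply/measurable_EFinP; apply: measurable_funM => //.
    exact: sub_sigma_measurable_fun.
  apply: eq_integral => x _; apply/esym/cvg_lim => //.
  by apply: cvgeZl => //; apply: cvg_nnsfun_approx => // y _; rewrite lee_fin.
rewrite !approxE //; congr (limn _); apply/funext => n.
rewrite !integral_mul_nnsfun //; apply: eq_fsbigr => r _; congr (_ * _)%E.
by apply: eqD; exact: (measurable_funPTI (g n) (measurable_set1 r)).
Qed.

Lemma Er_mul_sub_sigma (Y W f : T -> R) :
  Y \in Lfun P 1 -> W \in Lfun P 1 ->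
  (fun w => Y w * f w) \in Lfun P 1 -> (fun w => W w * f w) \in Lfun P 1 ->
  (forall A, <<s G >> A ->
     \int[P]_(x in A) (Y x)%:E = \int[P]_(x in A) (W x)%:E)%E ->
  measurable_fun (setT : set T') f ->
  Er P (fun w => Y w * f w) = Er P (fun w => W w * f w).
Proof.
move=> hY hW hYf hWf eqYW mf.
(* [D^+] and [D^-] integrate [G]-measurable functions alike, and the sign rule
   for [(D f)^+] and [(D f)^-] exchanges them. *)
pose D w := Y w - W w.
have mD : measurable_fun setT D.
  by apply: measurable_funB; [exact: Lfun_measurable hY | exact: Lfun_measurable hW].
have eqD A : <<s G >> A ->
    (\int[P]_(x in A) (D^\+ x)%:E = \int[P]_(x in A) (D^\- x)%:E)%E.
  move=> GA; have mA := G_measurable GA.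
  have iA (Z : T -> R) : Z \in Lfun P 1 -> P.-integrable A (EFin \o Z).
    by move/Lfun1_integrable; apply: integrableS.
  have : (\int[P]_(x in A) (D x)%:E = 0)%E.
    by rewrite integralB_EFin ?iA // eqYW // subee // integrable_fin_num ?iA.
  rewrite integralE funepos_EFin funeneg_EFin /= => D0.
  by apply: sube0_eq D0.
have swapD (h : T -> R) :
    measurable_fun (setT : set T') h -> (forall x, 0 <= h x) ->
    (\int[P]_x ((D^\+ x)%:E * (h x)%:E) = \int[P]_x ((D^\- x)%:E * (h x)%:E))%E.
  move=> mh h0; apply: eq_integral_mul_sub_sigma => //;
    by [exact: measurable_funrpos | exact: measurable_funrneg
       | exact: funrpos_ge0 | exact: funrneg_ge0].
apply/eqP; rewrite -subr_eq0 -ErB //; apply/eqP.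
rewrite (_ : (fun w => _) = (fun w => D w * f w)); last first.
  by apply/funext => w; rewrite mulrBl.
rewrite /Er unlock integralE funepos_EFin funeneg_EFin.
under eq_integral do rewrite /= funrposM EFinD !EFinM.
under [X in (_ - X)%E]eq_integral do rewrite /= funrnegM EFinD !EFinM.
have mfT := sub_sigma_measurable_fun mf.
have mprod (g1 g2 : T -> R) : measurable_fun setT g1 -> measurable_fun setT g2 ->
    measurable_fun setT (fun x => (g1 x)%:E * (g2 x)%:E)%E.
  by move=> m1 m2; apply: emeasurable_funM; exact/measurable_EFinP.
rewrite !ge0_integralD //; first last.
all: try by move=> x _; rewrite -EFinM lee_fin;
  apply: mulr_ge0; first [exact: funrpos_ge0 | exact: funrneg_ge0].
all: try by apply: mprod;
  first [by apply: measurable_funrpos | by apply: measurable_funrneg].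
rewrite (swapD _ (measurable_funrpos mf) (funrpos_ge0 f)).
rewrite (swapD _ (measurable_funrneg mf) (funrneg_ge0 f)).
by rewrite [X in (_ - X)%E]addeC fine_subee.
Qed.

Lemma Er_residual_mul_sub_sigma (Y W f : T -> R) :
  Y \in Lfun P 2%:E -> W \in Lfun P 2%:E -> f \in Lfun P 2%:E ->
  (forall A, <<s G >> A ->
     \int[P]_(x in A) (Y x)%:E = \int[P]_(x in A) (W x)%:E)%E ->
  measurable_fun (setT : set T') f ->
  Er P (fun w => (Y w - W w) * f w) = 0.
Proof.
move=> hY hW hf eqYW mf.
have hYf := Lfun2_mul_Lfun1 hY hf; have hWf := Lfun2_mul_Lfun1 hW hf.
under eq_fun do rewrite mulrBl.
rewrite ErB // (Er_mul_sub_sigma _ _ hYf hWf eqYW mf) ?subrr //; exact: Lfun2_Lfun1.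
Qed.

End sub_sigma_algebra.

Section L2_inner_product.
Context d (T : measurableType d) (R : realType) (P : probability T R).
Local Notation V := (LfunType P (lee1n 2)).

Lemma L2_sumE n (F : 'I_n -> V) w :
  ((\sum_(k < n) F k : V) : T -> R) w = \sum_(k < n) F k w.
Proof.
elim: n F => [|n IH] F; first by rewrite !big_ord0.
by rewrite !big_ord_recr -IH.
Qed.

Definition L2_dot (u v : V) : R := Er P (fun w => u w * v w).

Lemma L2_dotC u v : L2_dot u v = L2_dot v u.
Proof. by rewrite /L2_dot; congr Er; apply/funext => w; rewrite mulrC. Qed.

Lemma L2_dotDl u v z : L2_dot (u + v) z = L2_dot u z + L2_dot v z.
Proof.
by rewrite /L2_dot -ErD; [congr Er; apply/funext => w /=; rewrite mulrDl
  | apply: Lfun2_mul_Lfun1; exact: LfunP ..].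
Qed.

Lemma L2_dotZl a u z : L2_dot (a *: u) z = a * L2_dot u z.
Proof.
rewrite /L2_dot -ErZ; last by apply: Lfun2_mul_Lfun1; exact: LfunP.
by congr Er; apply/funext => w /=; rewrite mulrA.
Qed.

Lemma L2_dot_ge0 u : 0 <= L2_dot u u.
Proof. exact: Er_sqr_ge0. Qed.

Lemma Er_mul_sqr_eq0 (g h : T -> R) : g \in Lfun P 2%:E -> h \in Lfun P 2%:E ->
  Er P (fun w => g w * g w) = 0 -> Er P (fun w => h w * g w) = 0.
Proof.
move=> hg hh; have := @isotropic_orthogonal _ _ _ L2_dotC L2_dotDl L2_dotZl
  L2_dot_ge0 (Lfun_Sub (lee1n 2) hh) (Lfun_Sub (lee1n 2) hg).
by rewrite /L2_dot !Lfun_valP.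
Qed.

Lemma L2_projection n (v : nat -> T -> R) (x : T -> R) :
  (forall k, (k < n)%N -> v k \in Lfun P 2%:E) -> x \in Lfun P 2%:E ->
  exists c : nat -> R, forall i, (i < n)%N ->
    Er P (fun w => (x w - \sum_(k < n) c k * v k w) * v i w) = 0.
Proof.
move=> hv hx; pose lift f : V := insubd (0 : V) f.
have liftK f : f \in Lfun P 2%:E -> (lift f : T -> R) = f by move=> hf; exact: insubdK.
have [c hc] := orthogonal_projection_exists L2_dotC L2_dotDl L2_dotZl L2_dot_ge0
  n (fun k => lift (v k)) (lift x).
exists c => i hi; rewrite -[RHS](hc i hi) /L2_dot; congr Er; apply/funext => w.
rewrite [in RHS]liftK ?hv //; congr (_ * _); symmetry.
transitivity (lift x w - (\sum_(k < n) c k *: lift (v k) : V) w); first by [].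
rewrite L2_sumE liftK //; congr (_ - _); apply: eq_bigr => k _.
by rewrite [LHS]/= liftK ?hv.
Qed.

End L2_inner_product.

Lemma measurable_sum_in d (T : measurableType d) (R : realType) (D : set T)
    (I : eqType) (s : seq I) (h : I -> T -> R) :
  (forall i, i \in s -> measurable_fun D (h i)) ->
  measurable_fun D (fun x => \sum_(i <- s) h i x).
Proof.
elim: s => [|i s IH] hh.
  by under eq_fun do rewrite big_nil; exact: measurable_cst.
under eq_fun do rewrite big_cons.
apply: measurable_funD; first by apply: hh; rewrite mem_head.
by apply: IH => k ks; apply: hh; rewrite inE ks orbT.
Qed.

Section sigmaX.
Context d (T : measurableType d) (R : realType).
Variable X : nat -> T -> R.

Definition genX (I : set nat) : set (set T) :=
  [set A | exists j B, I j /\ measurable B /\ A = X j @^-1` B].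

Local Notation TX I := (g_sigma_algebraType (genX I)).

Lemma sigmaX_measurable I : (forall j, I j -> measurable_fun setT (X j)) ->
  forall A, sigmaX X I A -> measurable A.
Proof.
move=> mX; apply: smallest_sub; first exact: sigma_algebra_measurable.
move=> _ [j [B [Ij [mB ->]]]]; rewrite -(setTI (X j @^-1` B)).
exact: mX Ij measurableT B mB.
Qed.

Lemma sigmaX_sub I J : I `<=` J -> sigmaX X I `<=` sigmaX X J.
Proof.
move=> IJ; apply: sub_sigma_algebra2 => _ [j [B [Ij [mB ->]]]].
by exists j, B; split => //; exact: IJ.
Qed.

Lemma measurable_wrtE I (Z : T -> R) :
  measurable_wrt (sigmaX X I) Z <-> measurable_fun (setT : set (TX I)) Z.
Proof.
split => [mZ _ B mB | mZ B mB]; first by rewrite setTI; exact: mZ.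
by have := mZ measurableT B mB; rewrite setTI.
Qed.

Lemma measurable_X I j : I j -> measurable_fun (setT : set (TX I)) (X j).
Proof. by move=> Ij _ B mB; rewrite setTI; apply: sub_sigma_algebra; exists j, B. Qed.

Lemma measurable_lin_sum I (c0 : R) (c : nat -> R) (s : seq nat) :
  (forall j, j \in s -> I j) ->
  measurable_fun (setT : set (TX I)) (fun w => c0 + \sum_(j <- s) c j * X j w).
Proof.
move=> sI; apply: measurable_funD => //; apply: measurable_sum_in => j /sI Ij.
by apply: measurable_funM => //; exact: measurable_X.
Qed.

End sigmaX.

Section partial_linear_mean_impact.
Context d (T : measurableType d) (R : realType) (P : probability T R).
Variables (m : nat) (X : nat -> T -> R).

Lemma partial_lin_impact_eq0 (Y : T -> R) :
  (forall delta, Hlin1 P m X delta ->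
     expectation P (fun w => Y w * delta w) = 0%E) ->
  partial_lin_impact P m X Y = 0%E.
Proof.
move=> all0; rewrite /partial_lin_impact.
case: asboolP => [//|/eqP/set0P[delta0 hdelta0]].
rewrite (_ : [set _ | _ in _] = [set 0%E]) ?ereal_sup1 //.
apply/seteqP; split => [_ [delta hdelta <-] | _ ->] /=; first by rewrite all0.
by exists delta0 => //; rewrite all0.
Qed.

Lemma le_partial_lin_impact (Y delta : T -> R) : Hlin1 P m X delta ->
  (expectation P (fun w => (Y w * delta w)%R) <= partial_lin_impact P m X Y)%E.
Proof.
move=> hdelta; rewrite /partial_lin_impact asboolF => [|H0]; last by rewrite H0 in hdelta.
by apply: ereal_sup_ubound; exists delta.
Qed.

Hypothesis m_gt0 : (0 < m)%N.
Hypothesis hX : forall j, (j < m)%N -> X j \in Lfun P 2%:E.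

Local Notation I0 := [set j | (j < m)%N].
Local Notation I1 := [set j | (1 <= j < m)%N].
Local Notation TX I := (g_sigma_algebraType (genX X I)).

Let X0_Lfun2 : X 0%N \in Lfun P 2%:E. Proof. exact: hX. Qed.

Let sigmaX_measurable_lt I : I `<=` I0 -> forall A, sigmaX X I A -> measurable A.
Proof.
by move=> II0; apply: sigmaX_measurable => j /II0 hj; exact: Lfun_measurable (hX hj).
Qed.

Definition lin_comb (c0 : R) (c : nat -> R) : T -> R :=
  fun w => c0 + \sum_(1 <= j < m) c j * X j w.

Definition residual (c0 : R) (c : nat -> R) : T -> R :=
  fun w => X 0%N w - lin_comb c0 c w.

Lemma lin_comb_Lfun2 c0 c : lin_comb c0 c \in Lfun P 2%:E.
Proof.
apply: (LfunD (lee1n 2)); first exact: Lfun_cst.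
under eq_fun do rewrite big_seq; apply: (Lfun_sum (lee1n 2)) => j /=.
rewrite mem_index_iota => /andP[_ /hX]; exact: (LfunZ (lee1n 2)).
Qed.

Lemma residual_Lfun2 c0 c : residual c0 c \in Lfun P 2%:E.
Proof. exact: (LfunB (lee1n 2) X0_Lfun2 (lin_comb_Lfun2 c0 c)). Qed.

Lemma measurable_lin_comb c0 c : measurable_fun (setT : set (TX I1)) (lin_comb c0 c).
Proof. by apply: measurable_lin_sum => j; rewrite mem_index_iota. Qed.

Lemma Er_lin_comb_mul (v : T -> R) c0 c : v \in Lfun P 2%:E -> Er P v = 0 ->
  (forall j, (1 <= j < m)%N -> Er P (fun w => X j w * v w) = 0) ->
  Er P (fun w => lin_comb c0 c w * v w) = 0.
Proof.
move=> hv v0 Xv0; have hv1 := Lfun2_Lfun1 hv.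
have hXv j : (1 <= j < m)%N -> (fun w => X j w * v w) \in Lfun P 1.
  by case/andP => _ /hX hj; exact: Lfun2_mul_Lfun1.
rewrite (_ : (fun w => _) = fun w =>
    c0 * v w + \sum_(1 <= j < m | (1 <= j < m)%N) c j * (X j w * v w)); last first.
  apply/funext => w; rewrite mulrDl mulr_suml big_nat_cond; congr (_ + _).
  by apply: eq_big => [j | j _]; rewrite ?andbT ?mulrA.
rewrite ErD; first last.
- by apply: (Lfun_sum (lexx _)) => j /hXv; exact: (LfunZ (lexx _)).
- exact: (LfunZ (lexx _)).
rewrite ErZ // v0 mulr0 add0r Er_sum => [|j /hXv]; last exact: (LfunZ (lexx _)).
by rewrite big1 // => j /[dup] /hXv hj /Xv0; rewrite ErZ // => ->; rewrite mulr0.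
Qed.

Lemma residual_projection : exists c0 c, Er P (residual c0 c) = 0 /\
  forall j, (1 <= j < m)%N -> Er P (fun w => X j w * residual c0 c w) = 0.
Proof.
pose v k : T -> R := if k == 0%N then fun _ => 1 else X k.
have hv k : (k < m)%N -> v k \in Lfun P 2%:E.
  by rewrite /v; case: eqP => _ hk; [exact: Lfun_cst | exact: hX].
have [c hc] := L2_projection hv X0_Lfun2.
have resE w : X 0%N w - \sum_(k < m) c k * v k w = residual (c 0%N) c w.
  rewrite /residual /lin_comb -(big_mkord xpredT (fun k => c k * v k w)).
  rewrite (big_ltn m_gt0) /= mulr1; congr (_ - (_ + _)).
  by apply: eq_big_nat => k /andP[k1 _]; rewrite /v; case: eqP k1 => // ->.
exists (c 0%N), c; split.
  by have := hc 0%N m_gt0; under eq_fun do rewrite resE /v /= mulr1.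
move=> j /andP[j1 jm]; have := hc j jm; under eq_fun do rewrite resE mulrC.
by rewrite /v; case: eqP j1 => // ->.
Qed.

Lemma lin_comb_residual_decomp (eta0 : R) (eta : nat -> R) b0 b w :
  eta0 + \sum_(j < m) eta j * X j w =
  lin_comb (eta0 + eta 0%N * b0) (fun j => eta j + eta 0%N * b j) w
  + eta 0%N * residual b0 b w.
Proof.
rewrite /residual /lin_comb -(big_mkord xpredT (fun j => eta j * X j w)).
rewrite (big_ltn m_gt0) /=; under [in RHS]eq_bigr do rewrite mulrDl -mulrA.
by rewrite big_split /= -mulr_sumr; ring.
Qed.

Lemma Hlin1_Lfun2 delta : Hlin1 P m X delta -> delta \in Lfun P 2%:E.
Proof.
case=> -[eta0 [eta ->]] _ _ _; apply: (LfunD (lee1n 2)); first exact: Lfun_cst.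
by apply: (Lfun_sum (lee1n 2)) => j _; exact: (LfunZ (lee1n 2) _ (hX (ltn_ord j))).
Qed.

Lemma measurable_Hlin1 delta : Hlin1 P m X delta ->
  measurable_fun (setT : set (TX I0)) delta.
Proof.
case=> -[eta0 [eta ->]] _ _ _.
rewrite (_ : (fun w => _) = fun w => eta0 + \sum_(0 <= j < m) eta j * X j w).
  by apply: measurable_lin_sum => j; rewrite mem_index_iota.
by apply/funext => w; rewrite big_mkord.
Qed.

Section linear_condexp.
Variables (b0 : R) (b : nat -> R).
Hypothesis lin_condexp : is_cond_exp P (sigmaX X I1) (X 0%N) (lin_comb b0 b).

Lemma Er_residual_mul (f : T -> R) : f \in Lfun P 2%:E ->
  measurable_fun (setT : set (TX I1)) f ->
  Er P (fun w => residual b0 b w * f w) = 0.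
Proof.
case: lin_condexp => _ _ eqL hf mf.
apply: (Er_residual_mul_sub_sigma _ X0_Lfun2 (lin_comb_Lfun2 b0 b) hf eqL mf).
by apply: sigmaX_measurable_lt => j /andP[].
Qed.

Lemma Er_mul_Hlin1 (Z delta : T -> R) : Z \in Lfun P 2%:E ->
  measurable_fun (setT : set (TX I1)) Z -> Hlin1 P m X delta ->
  Er P (fun w => Z w * delta w) = 0.
Proof.
move=> hZ mZ hdelta; have hdelta2 := Hlin1_Lfun2 hdelta.
case: hdelta => -[eta0 [eta edelta]] Edelta _ EXdelta.
set t := eta 0%N; set delta' := lin_comb (eta0 + t * b0) (fun j => eta j + t * b j).
have deltaE : delta = fun w => delta' w + t * residual b0 b w.
  by rewrite edelta; apply/funext => w; exact: lin_comb_residual_decomp.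
have hr := residual_Lfun2 b0 b.
have hdelta' : delta' \in Lfun P 2%:E := lin_comb_Lfun2 _ _.
have ErD_residual (g : T -> R) : g \in Lfun P 2%:E ->
    Er P (fun w => g w * delta w) =
    Er P (fun w => g w * delta' w) + t * Er P (fun w => residual b0 b w * g w).
  move=> hg; rewrite deltaE; under eq_fun do rewrite mulrDr mulrCA [X in t * X]mulrC.
  have hgd' := Lfun2_mul_Lfun1 hg hdelta'; have hrg := Lfun2_mul_Lfun1 hr hg.
  by rewrite ErD ?ErZ //; exact: (LfunZ (lexx _) _ hrg).
have Er_delta_mul (g : T -> R) :
    g \in Lfun P 2%:E -> measurable_fun (setT : set (TX I1)) g ->
    Er P (fun w => g w * delta w) = Er P (fun w => g w * delta' w).
  by move=> hg mg; rewrite ErD_residual // Er_residual_mul // mulr0 addr0.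
have delta'0 : Er P delta' = 0.
  have one_mul (f : T -> R) : (fun w => 1 * f w) = f by apply/funext => w; rewrite mul1r.
  have := @Er_delta_mul (fun _ => 1) (Lfun_cst P 1 2) (measurable_cst _).
  by rewrite !one_mul /Er Edelta => <-.
have delta'X j : (1 <= j < m)%N -> Er P (fun w => X j w * delta' w) = 0.
  move=> hj; have /andP[_ /hX hXj] := hj.
  rewrite -Er_delta_mul //; last exact: measurable_X.
  by rewrite /Er EXdelta.
have delta'2 : Er P (fun w => delta' w * delta' w) = 0 by exact: Er_lin_comb_mul.
by rewrite Er_delta_mul // Er_mul_sqr_eq0.
Qed.

Lemma free_of_confounding_of_lin_condexp : free_of_confounding P m X.
Proof.
move=> Y hY [Z [[_ _ eqYZ] mZ1 hZ]]; apply: partial_lin_impact_eq0 => delta hdelta.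
have hdelta2 := Hlin1_Lfun2 hdelta.
rewrite expectation_Er ?(Lfun2_mul_Lfun1 hY hdelta2) //; congr EFin.
rewrite (Er_mul_sub_sigma (sigmaX_measurable_lt (fun j hj => hj)) (Lfun2_Lfun1 hY)
  (Lfun2_Lfun1 hZ) (Lfun2_mul_Lfun1 hY hdelta2) (Lfun2_mul_Lfun1 hZ hdelta2) eqYZ
  (measurable_Hlin1 hdelta)).
exact: Er_mul_Hlin1 hZ ((measurable_wrtE _ _ _).1 mZ1) hdelta.
Qed.

End linear_condexp.

Lemma Hlin1_scaled_residual c0 c t :
  Er P (residual c0 c) = 0 ->
  (forall j, (1 <= j < m)%N -> Er P (fun w => X j w * residual c0 c w) = 0) ->
  t ^+ 2 * Er P (fun w => residual c0 c w * residual c0 c w) = 1 ->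
  Hlin1 P m X (fun w => t * residual c0 c w).
Proof.
move=> r0 rX ht; have hr := residual_Lfun2 c0 c.
have hr1 := Lfun2_Lfun1 hr; have hrr := Lfun2_mul_Lfun1 hr hr.
split.
- exists (- t * c0), (fun j => if j == 0%N then t else - t * c j); apply/funext => w.
  rewrite /residual /lin_comb.
  rewrite -(big_mkord xpredT (fun j => (if j == 0%N then t else - t * c j) * X j w)).
  rewrite (big_ltn m_gt0) /=.
  have -> : \sum_(1 <= j < m) (if j == 0%N then t else - t * c j) * X j w =
      - t * \sum_(1 <= j < m) c j * X j w.
    rewrite mulr_sumr; apply: eq_big_nat => j /andP[j1 _].
    by rewrite (negPf (lt0n_neq0 j1)) mulrA.
  ring.
- by rewrite expectation_Er ?ErZ ?r0 ?mulr0 //; exact: (LfunZ (lexx _) _ hr1).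
- under eq_fun do rewrite exprMn [residual _ _ _ ^+ 2]expr2.
  by rewrite expectation_Er ?ErZ ?ht //; exact: (LfunZ (lexx _) _ hrr).
- move=> j hj; have /andP[_ /hX /Lfun2_mul_Lfun1 /(_ hr) hXr] := hj.
  under eq_fun do rewrite mulrCA.
  by rewrite expectation_Er ?ErZ ?rX ?mulr0 //; exact: (LfunZ (lexx _) _ hXr).
Qed.

Lemma Er_indic_mul_residual c0 c A :
  free_of_confounding P m X -> Er P (residual c0 c) = 0 ->
  (forall j, (1 <= j < m)%N -> Er P (fun w => X j w * residual c0 c w) = 0) ->
  sigmaX X I1 A -> Er P (fun w => \1_A w * residual c0 c w) = 0.
Proof.
move=> free r0 rX A1; have hr := residual_Lfun2 c0 c.
have mA : measurable A by apply: (sigmaX_measurable_lt _ A1) => j /andP[].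
have h1A := Lfun2_indic P mA.
set s2 := Er P (fun w => residual c0 c w * residual c0 c w).
have [s20|s2_neq0] := eqVneq s2 0; first exact: Er_mul_sqr_eq0.
have wrt_indic I : sigmaX X I A -> measurable_wrt (sigmaX X I) (\1_A : T -> R).
  by move=> AI; apply/measurable_wrtE; exact: measurable_indic.
have impact0 : partial_lin_impact P m X \1_A = 0%E.
  apply: (free _ h1A); exists \1_A; split => //; first split => //.
  - by apply: wrt_indic; apply: sigmaX_sub A1 => j /andP[].
  - exact/Lfun1_integrable/Lfun2_Lfun1.
  - exact: wrt_indic.
set e := Er P _.
have e_le0 t : t ^+ 2 * s2 = 1 -> t * e <= 0.
  move=> ht; have := le_partial_lin_impact \1_A (Hlin1_scaled_residual r0 rX ht).
  rewrite impact0 expectation_Er; last first.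
    exact: Lfun2_mul_Lfun1 h1A (LfunZ (lee1n 2) _ hr).
  under eq_fun do rewrite mulrCA.
  by rewrite ErZ ?lee_fin //; exact: Lfun2_mul_Lfun1.
have s2_gt0 : 0 < s2 by rewrite lt_def s2_neq0 Er_sqr_ge0.
pose k := (Num.sqrt s2)^-1; have k_gt0 : 0 < k by rewrite invr_gt0 sqrtr_gt0.
have k2 : k ^+ 2 * s2 = 1 by rewrite exprVn sqr_sqrtr ?ltW // mulVf.
have := e_le0 _ k2; have := e_le0 (- k); rewrite sqrrN mulNr oppr_le0 => /(_ k2).
rewrite !pmulr_rle0 ?pmulr_rge0 // => e_ge0 e_le0'.
by apply/le_anti; rewrite e_le0' e_ge0.
Qed.

Lemma lin_condexp_of_free_of_confounding : free_of_confounding P m X ->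
  exists b0 b, is_cond_exp P (sigmaX X I1) (X 0%N) (lin_comb b0 b).
Proof.
move=> free; have [c0 [c [r0 rX]]] := residual_projection.
exists c0, c; split.
- by apply/measurable_wrtE; exact: measurable_lin_comb.
- exact/Lfun1_integrable/Lfun2_Lfun1/lin_comb_Lfun2.
move=> A A1; have mA : measurable A by apply: (sigmaX_measurable_lt _ A1) => j /andP[].
have iA (f : T -> R) : f \in Lfun P 2%:E -> P.-integrable A (EFin \o f).
  by move/Lfun2_Lfun1/Lfun1_integrable; apply: integrableS.
apply: sube0_eq; rewrite -integralB_EFin ?iA ?lin_comb_Lfun2 // integral_setE_indic //.
have := expectation_Er (Lfun2_mul_Lfun1 (Lfun2_indic P mA) (residual_Lfun2 c0 c)).
by rewrite unlock Er_indic_mul_residual // => e; exact: e.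
Qed.

End partial_linear_mean_impact.

Theorem mainTheorem4 (d : measure_display) (T : measurableType d) (R : realType)
  (P : probability T R) (m : nat) (X : nat -> T -> R)
  (hm : (2 <= m)%N) (hX : forall j, (j < m)%N -> sq_integrable P (X j)) :
  free_of_confounding P m X <->
  exists (beta0 : R) (beta : nat -> R),
    is_cond_exp P (sigmaX X [set j | (1 <= j < m)%N]) (X 0%N)
      (fun w => beta0 + \sum_(1 <= j < m) beta j * X j w).
Proof.
have m_gt0 : (0 < m)%N by exact: leq_trans hm.
split; first exact: lin_condexp_of_free_of_confounding.
by case=> b0 [b lin_condexp]; exact: free_of_confounding_of_lin_condexp lin_condexp.
Qed.
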